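(* Let $R$ be a valuation domain with quotient field $Q\neq R$, and let $A\subseteq J$ be $R$-submodules of $Q$. Suppose $J=\bigcup_{\nu<\omega_1} r_\nu^{-1}R=\bigcup_{\nu<\omega_1} s_\nu^{-1}R$, where $r_\nu,s_\nu\in R\setminus\{0\}$, $r_\mu\mid r_\nu$ and $s_\mu\mid s_\nu$ whenever $\mu<\nu<\omega_1$. Then the set $\{\delta<\omega_1 : \bigcap_{\sigma<\delta} r_\sigma A=\bigcap_{\sigma<\delta} s_\sigma A\}$ is a closed unbounded subset of $\omega_1$.
   Context: A subset $C\subseteq\omega_1$ is closed unbounded (a cub) if $\sup C=\omega_1$ and for every $Y\subseteq C$ with $\sup Y<\omega_1$ we have $\sup Y\in C$. *)

From HB Require Import structures.
From mathcomp Require Import all_boot all_order all_algebra.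
Set Implicit Arguments. Unset Strict Implicit. Unset Printing Implicit Defensive.
Import GRing.Theory.
Local Open Scope ring_scope.

Definition countable_set (W : Type) (A : W -> Prop) : Prop :=
  exists f : W -> nat, forall x y, A x -> A y -> f x = f y -> x = y.

(* (W, lt) is (order-isomorphic to) omega_1: a strict well-order that is
   total, uncountable, and all of whose proper initial segments are countable. *)
Definition is_omega1 (W : Type) (lt : W -> W -> Prop) : Prop :=
  (forall x, ~ lt x x) /\
  (forall x y z, lt x y -> lt y z -> lt x z) /\
  (forall x y, lt x y \/ x = y \/ lt y x) /\
  well_founded lt /\
  (forall a, countable_set (fun b => lt b a)) /\
  ~ countable_set (fun _ : W => True).

Definition le_of (W : Type) (lt : W -> W -> Prop) (x y : W) : Prop :=
  lt x y \/ x = y.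

Definition is_sup (W : Type) (lt : W -> W -> Prop) (Y : W -> Prop) (s : W) :=
  (forall y, Y y -> le_of lt y s) /\
  (forall t, (forall y, Y y -> le_of lt y t) -> le_of lt s t).

(* closed unbounded subset of omega_1 (as in the paper):
   sup C = omega_1, and every Y ⊆ C with sup Y < omega_1 has sup Y ∈ C. *)
Definition cub (W : Type) (lt : W -> W -> Prop) (C : W -> Prop) : Prop :=
  (forall a, exists b, C b /\ lt a b) /\
  (forall Y : W -> Prop, (forall y, Y y -> C y) ->
     forall s, is_sup lt Y s -> C s).

Definition is_subring (Q : fieldType) (R : Q -> Prop) : Prop :=
  R 0 /\ R 1 /\ (forall x y, R x -> R y -> R (x - y)) /\
  (forall x y, R x -> R y -> R (x * y)).

Definition is_quotient_field (Q : fieldType) (R : Q -> Prop) : Prop :=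
  forall q : Q, exists a b, R a /\ R b /\ b != 0 /\ q = a / b.

Definition is_valuation_ring (Q : fieldType) (R : Q -> Prop) : Prop :=
  forall x : Q, x != 0 -> R x \/ R x^-1.

Definition is_Rsubmodule (Q : fieldType) (R : Q -> Prop) (M : Q -> Prop) :=
  M 0 /\ (forall x y, M x -> M y -> M (x + y)) /\
  (forall r x, R r -> M x -> M (r * x)).

Definition rdvd (Q : fieldType) (R : Q -> Prop) (a b : Q) : Prop :=
  exists t, R t /\ b = t * a.

Definition smul (Q : fieldType) (c : Q) (M : Q -> Prop) : Q -> Prop :=
  fun x => exists m, M m /\ x = c * m.

(* ⋂_{σ<δ} r_σ A  (equals Q when δ = 0) *)
Definition bigcap_lt (W : Type) (lt : W -> W -> Prop) (Q : fieldType)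
  (r : W -> Q) (A : Q -> Prop) (d : W) : Q -> Prop :=
  fun x => forall s, lt s d -> smul (r s) A x.

From HB Require Import structures.
From mathcomp Require Import all_boot all_order all_algebra.
From Stdlib Require Import ClassicalEpsilon.
Set Implicit Arguments. Unset Strict Implicit. Unset Printing Implicit Defensive.
Import GRing.Theory.
Local Open Scope ring_scope.

(* Since A is an R-module, [r_v A] contains [s_u A] whenever [r_v] divides
   [s_u], and since both families generate J every [r_v] divides some [s_u]
   and vice versa. Choosing such indices u = g v (and v = h u) gives two maps
   W -> W; at every δ closed under g and h the two intersections coincide,
   and the closure points of countably many maps are unbounded in omega_1.
   Closedness holds because at a limit δ = sup Y the intersection below δ is
   the intersection of those below the members of Y. *)

Lemma countable_bigcup (T : Type) (P : nat -> T -> Prop) :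
  (forall n, countable_set (P n)) -> countable_set (fun x => exists n, P n x).
Proof.
move=> /choice [f Hf].
have /choice [N HN] : forall x, exists n, (exists m, P m x) -> P n x.
  move=> x; case: (classic (exists n, P n x)) => [[n Pn]|nP].
  - by exists n.
  - by exists 0%N.
exists (fun x => pickle (N x, f (N x) x)) => x y Px Py.
move=> /(pcan_inj (@pickleK _)) [eN ef].
by apply: (Hf (N x)); [exact: HN | rewrite eN; exact: HN | rewrite {2}eN].
Qed.

Lemma countable_enum (T : Type) (P : T -> Prop) (x0 : T) :
  countable_set P -> exists E : nat -> T, forall v, P v -> exists n, E n = v.
Proof.
move=> [f Hf].
have /choice [E HE] : forall n, exists y,
    (exists x, P x /\ f x = n) -> P y /\ f y = n.
  move=> n; case: (classic (exists x, P x /\ f x = n)) => [[x Hx]|nx].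
  - by exists x.
  - by exists x0.
exists E => v Pv; exists (f v).
have [PE fE] := HE (f v) (ex_intro _ v (conj Pv erefl)).
exact: Hf.
Qed.

Lemma wf_exists_min (W : Type) (lt : W -> W -> Prop) (P : W -> Prop) x :
  well_founded lt -> P x -> exists m, P m /\ forall y, P y -> ~ lt y m.
Proof.
move=> Hwf Px; apply: NNPP => nomin.
suff nP : forall z, ~ P z by exact: nP Px.
move=> z; elim/(well_founded_ind Hwf): z => z IH Pz.
by apply: nomin; exists z; split=> // y Py /IH.
Qed.

Section Omega1.

Variables (W : Type) (lt : W -> W -> Prop).
Hypothesis HW : is_omega1 lt.

Let lt_irrefl : forall x, ~ lt x x := HW.1.
Let lt_trans : forall x y z, lt x y -> lt y z -> lt x z := HW.2.1.
Let lt_total : forall x y, lt x y \/ x = y \/ lt y x := HW.2.2.1.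
Let lt_wf : well_founded lt := HW.2.2.2.1.
Let countable_lt : forall a, countable_set (fun b => lt b a) := HW.2.2.2.2.1.
Let uncountable : ~ countable_set (fun _ : W => True) := HW.2.2.2.2.2.

Lemma countable_le a : countable_set (fun b => le_of lt b a).
Proof.
have [f Hf] := countable_lt a.
exists (fun b => if excluded_middle_informative (b = a) then 0%N else (f b).+1).
have lt_of_ne b : le_of lt b a -> b <> a -> lt b a by case.
move=> x y xa ya; do 2 case: excluded_middle_informative => ? //=.
- by congruence.
- by move=> [] /Hf; apply; apply: lt_of_ne.
Qed.

Lemma omega1_bounded_seq (e : nat -> W) : exists b, forall n, lt (e n) b.
Proof.
apply: NNPP => unbounded; apply: uncountable.
have cover x : exists n, le_of lt x (e n).
  apply: NNPP => nx; apply: unbounded; exists x => n.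
  have [|[exn|xen]] := lt_total (e n) x => //.
  - by case: nx; exists n; right.
  - by case: nx; exists n; left.
have [f Hf] := @countable_bigcup _ (fun n b => le_of lt b (e n))
  (fun n => countable_le (e n)).
by exists f => x y _ _; apply: Hf; apply: cover.
Qed.

Lemma omega1_closure_step (f : nat -> W -> W) b :
  exists c, lt b c /\ forall n v, le_of lt v b -> lt (f n v) c.
Proof.
have [E HE] := countable_enum b (countable_le b).
pose seq_below k := if k is k'.+1 then
  (if @unpickle (nat * nat)%type k' is Some (n, m) then f n (E m) else b) else b.
have [c Hc] := omega1_bounded_seq seq_below.
exists c; split; first exact: (Hc 0%N).
move=> n v /HE [m <-].
by have := Hc (pickle (n, m)).+1; rewrite /seq_below pickleK.
Qed.

(* The least upper bound of the iterates a, F a, F (F a), ... of the step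
   function is closed under every f n. *)
Lemma omega1_closure_point (f : nat -> W -> W) a :
  exists d, lt a d /\ forall n v, lt v d -> lt (f n v) d.
Proof.
have /choice [F HF] := omega1_closure_step f.
have [b Hb] := omega1_bounded_seq (fun k => iter k F a).
have [d [Hd dmin]] :=
  wf_exists_min (P := fun d => forall k, lt (iter k F a) d) lt_wf Hb.
exists d; split; first exact: (Hd 0%N).
move=> n v vd.
have [k vk] : exists k, le_of lt v (iter k F a).
  apply: NNPP => nv; apply: (dmin v) => // k.
  have [|[kv|vk]] := lt_total (iter k F a) v => //.
  - by case: nv; exists k; right.
  - by case: nv; exists k; left.
exact: lt_trans ((HF (iter k F a)).2 n v vk) (Hd k.+1).
Qed.

Lemma sup_not_attained (Y : W -> Prop) d v :
  is_sup lt Y d -> ~ Y d -> lt v d -> exists y, [/\ Y y, lt v y & lt y d].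
Proof.
move=> [ub lub] nYd vd; apply: NNPP => none.
have : le_of lt d v.
  apply: lub => y Yy.
  have [yv|[yv|vy]] := lt_total y v; [by left | by right |].
  case: none; exists y; split=> //.
  by case: (ub y Yy) => // yd; rewrite yd in Yy.
case=> [dv|dv]; first exact: lt_irrefl (lt_trans dv vd).
by rewrite dv in vd; apply: lt_irrefl vd.
Qed.

Lemma bigcap_lt_sup (Q : fieldType) (c : W -> Q) (A : Q -> Prop) Y d :
  is_sup lt Y d -> ~ Y d -> forall x,
  bigcap_lt lt c A d x <-> forall y, Y y -> bigcap_lt lt c A y x.
Proof.
move=> supd nYd x; split=> Hx.
- move=> y Yy v vy; apply: Hx.
  by case: (supd.1 y Yy) => [yd|<-] //; apply: lt_trans vy yd.
- by move=> v /(sup_not_attained supd nYd) [y [Yy vy _]]; apply: Hx Yy v vy.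
Qed.

End Omega1.

Section Divisibility.

Variables (Q : fieldType) (R : Q -> Prop).

Lemma smul_rdvd (A : Q -> Prop) a b x :
  is_Rsubmodule R A -> rdvd R a b -> smul b A x -> smul a A x.
Proof.
move=> [_ [_ HA]] [t [Rt ->]] [m [Am ->]].
by exists (t * m); split; [apply: HA | rewrite mulrCA mulrA].
Qed.

Lemma rdvd_of_union_sub (W : Type) (r s : W -> Q) :
  R 1 -> (forall n, r n != 0) -> (forall n, s n != 0) ->
  (forall x, (exists n, smul (r n)^-1 R x) -> exists n, smul (s n)^-1 R x) ->
  forall v, exists u, rdvd R (r v) (s u).
Proof.
move=> R1 r0 s0 sub v.
have [|u [t [Rt Et]]] := sub (r v)^-1.
  by exists v, 1; split; rewrite ?mulr1.
exists u, t; split=> //.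
have -> : t = s u * (r v)^-1 by rewrite Et mulrA mulfV // mul1r.
by rewrite mulfVK.
Qed.

Lemma bigcap_lt_sub (W : Type) (lt : W -> W -> Prop) (r s : W -> Q)
    (A : Q -> Prop) d x :
  is_Rsubmodule R A ->
  (forall v, lt v d -> exists u, lt u d /\ rdvd R (r v) (s u)) ->
  bigcap_lt lt s A d x -> bigcap_lt lt r A d x.
Proof.
move=> HA cof Hx v /cof [u [ud rs]].
exact: smul_rdvd HA rs (Hx u ud).
Qed.

End Divisibility.

Theorem lemma2 (W : Type) (lt : W -> W -> Prop) (HW : is_omega1 lt)
  (Q : fieldType) (R : Q -> Prop)
  (HRsub : is_subring R) (HRfrac : is_quotient_field R)
  (HRval : is_valuation_ring R) (HQR : exists q : Q, ~ R q)
  (A J : Q -> Prop) (HA : is_Rsubmodule R A) (HJ : is_Rsubmodule R J)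
  (HAJ : forall x, A x -> J x)
  (r s : W -> Q)
  (Hr0 : forall n, R (r n) /\ r n != 0) (Hs0 : forall n, R (s n) /\ s n != 0)
  (Hrdvd : forall m n, lt m n -> rdvd R (r m) (r n))
  (Hsdvd : forall m n, lt m n -> rdvd R (s m) (s n))
  (HJr : forall x, J x <-> exists n, smul (r n)^-1 R x)
  (HJs : forall x, J x <-> exists n, smul (s n)^-1 R x) :
  cub lt (fun d => forall x, bigcap_lt lt r A d x <-> bigcap_lt lt s A d x).
Proof.
have [_ [R1 _]] := HRsub.
have r0 n := (Hr0 n).2; have s0 n := (Hs0 n).2.
have /choice [g Hg] :=
  rdvd_of_union_sub R1 r0 s0 (fun x => (HJs x).1 \o (HJr x).2).
have /choice [h Hh] :=
  rdvd_of_union_sub R1 s0 r0 (fun x => (HJr x).1 \o (HJs x).2).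
split.
- move=> a.
  have [d [ad Hd]] := omega1_closure_point HW (fun n => if n is 0%N then g else h) a.
  exists d; split=> // x; split; apply: (bigcap_lt_sub HA) => v vd.
  + by exists (h v); split; [apply: (Hd 1%N) | apply: Hh].
  + by exists (g v); split; [apply: (Hd 0%N) | apply: Hg].
- move=> Y HY d supd.
  case: (classic (Y d)) => [/HY // | nYd] x.
  rewrite (bigcap_lt_sup HW r A supd nYd) (bigcap_lt_sup HW s A supd nYd).
  by split=> Hx y Yy; apply/(HY y Yy); apply: Hx.
Qed.
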